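(* Any quadric which vanishes on $W_d$ is a linear combination of elements of $\mathcal{D}$.
   Context: Let $P_d$ be a convex polygon with $d\ge 4$ vertices $v_1,\dots,v_d$ (indices mod $d$) over a field $\mathbb{K}$ with no three edge lines concurrent. With ${\bf v}_i=(v_i,1)$, $\alpha_j=|{\bf v}_{j-1}\,{\bf v}_j\,{\bf v}_{j+1}|$, $\ell_j=|{\bf v}_j\,{\bf v}_{j+1}\,{\bf p}|$, ${\bf p}=(x,y,z)$, $b_i=\alpha_i\prod_{j\ne i-1,i}\ell_j$, the Wachspress surface $W_d\subseteq\mathbb{P}^{d-1}$ is the closure of the image of $p\mapsto(b_1,\dots,b_d)$. In $S=\mathbb{K}[x_1,\ldots,x_d]$, a diagonal monomial is $x_ix_j$ with $j\notin\{i-1,i,i+1\}$, and $\mathcal{D}\subseteq S_2$ is the span of the diagonal monomials. *)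

From HB Require Import structures.
From mathcomp Require Import all_boot all_order all_algebra.
From mathcomp Require Import mpoly.
Set Implicit Arguments. Unset Strict Implicit. Unset Printing Implicit Defensive.
Import Order.TTheory GRing.Theory Num.Theory.
Local Open Scope ring_scope.

Definition det3 (T : comNzRingType) (a b c : 'I_3 -> T) : T :=
  \det (\matrix_(r < 3, k < 3)
          (if r == 0 :> nat then a k else if r == 1 :> nat then b k else c k)).

Section Wachspress.
Variables (R : realFieldType) (d : nat) (v : 'I_d -> R * R).

Definition vhom (i : 'I_d) : 'I_3 -> R :=
  fun k => [:: (v i).1; (v i).2; 1]`_k.

Definition walpha (j : 'I_d) : R :=
  det3 (vhom (ord_pred j)) (vhom j) (vhom (ordS j)).

Definition well (j : 'I_d) : {mpoly R[3]} :=
  det3 (fun k => (vhom j k)%:MP) (fun k => (vhom (ordS j) k)%:MP)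
       (fun k => 'X_k).

Definition wb (i : 'I_d) : {mpoly R[3]} :=
  walpha i *: \prod_(j : 'I_d | (j != ord_pred i) && (j != i)) well j.

(* x_i x_j is a diagonal monomial iff j not in {i-1, i, i+1} (mod d) *)
Definition diagonal_pair (i j : 'I_d) : bool :=
  [&& j != ord_pred i, j != i & j != ordS i].

(* P_d is a (strictly) convex polygon with vertices v_1..v_d listed in cyclic
   order (either orientation): all other vertices lie strictly on one
   common side of each edge line. *)
Definition convex_polygon : Prop :=
  (forall i j : 'I_d, j != i -> j != ordS i ->
     0 < det3 (vhom i) (vhom (ordS i)) (vhom j)) \/
  (forall i j : 'I_d, j != i -> j != ordS i ->
     det3 (vhom i) (vhom (ordS i)) (vhom j) < 0).

Definition no_three_edge_lines_concurrent : Prop :=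
  forall i j k : 'I_d, i != j -> j != k -> i != k ->
    forall p : 'I_3 -> R, (exists k, p k != 0) ->
      ~ [/\ (well i).@[p] = 0, (well j).@[p] = 0 & (well k).@[p] = 0].

(* The quadric q vanishes on W_d: it vanishes at every point of the image of
   p |-> (b_1(p) : ... : b_d(p)) (equivalently on its Zariski closure). *)
Definition vanishes_on_W (q : {mpoly R[d]}) : Prop :=
  forall p : 'I_3 -> R, (exists i, (wb i).@[p] != 0) ->
    q.@[fun i => (wb i).@[p]] = 0.

Definition in_diag_span (q : {mpoly R[d]}) : Prop :=
  exists c : 'I_d -> 'I_d -> R,
    q = \sum_(i : 'I_d) \sum_(j : 'I_d | diagonal_pair i j)
          c i j *: ('X_i * 'X_j).

End Wachspress.

From HB Require Import structures.
From mathcomp Require Import all_boot all_order all_algebra.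
From mathcomp Require Import mpoly.
From mathcomp Require Import ring zify.
Import Order.TTheory GRing.Theory Num.Theory.
Local Open Scope ring_scope.

(* Write q = sum_(i <= j) c_ij x_i x_j.  At a vertex v_k every b_i with i <> k
   contains a factor ell_j vanishing at v_k, while convexity keeps all factors
   of b_k nonzero; so q(b(v_k)) = c_kk b_k(v_k)^2 forces c_kk = 0.  At the point
   v_k + v_(k+1) of the edge line ell_k only b_k and b_(k+1) survive, both
   nonzero because the other vertices lie strictly on one side of each edge
   line; with the squares already gone this leaves c_(k,k+1) b_k b_(k+1) = 0.
   Hence only the coefficients of diagonal monomials can be nonzero. *)

Lemma liftE m (i : 'I_m.+1) (j : 'I_m) : lift i j = inord (bump i j).
Proof. by apply: val_inj; rewrite /= inordK // (ltn_ord (lift i j)). Qed.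

Lemma det3E (T : comNzRingType) (a b c : 'I_3 -> T) :
  det3 a b c = a (inord 0) * (b (inord 1) * c (inord 2) - b (inord 2) * c (inord 1))
             - a (inord 1) * (b (inord 0) * c (inord 2) - b (inord 2) * c (inord 0))
             + a (inord 2) * (b (inord 0) * c (inord 1) - b (inord 1) * c (inord 0)).
Proof.
rewrite /det3 (expand_det_row _ ord0) !big_ord_recl big_ord0 /cofactor.
rewrite !(expand_det_row _ ord0) !big_ord_recl !big_ord0 /cofactor !det_mx11.
rewrite !mxE /= !liftE /bump /= !addn0 !add0n.
have -> : (ord0 : 'I_3) = inord 0 by apply: val_inj; rewrite /= inordK.
do ?rewrite inordK //=.
rewrite -[(1+1)%N]/2%N -[(1+0)%N]/1%N -[(0+1)%N]/1%N -[(0+0)%N]/0%N; ring.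
Qed.

Lemma det3D (T : comNzRingType) (a b c c' : 'I_3 -> T) :
  det3 a b (fun k => c k + c' k) = det3 a b c + det3 a b c'.
Proof. rewrite !det3E; ring. Qed.

Lemma det3_eq13 (T : comNzRingType) (a b : 'I_3 -> T) : det3 a b a = 0.
Proof. rewrite !det3E; ring. Qed.

Lemma det3_eq23 (T : comNzRingType) (a b : 'I_3 -> T) : det3 a b b = 0.
Proof. rewrite !det3E; ring. Qed.

Lemma ordS_neq n (i : 'I_n) : (1 < n)%N -> ordS i != i.
Proof.
move=> hn; apply/eqP => /(congr1 val) /=; have := ltn_ord i.
case: (ltngtP i.+1 n) => [h|h|h] hi; last by rewrite h modnn; lia.
- by rewrite modn_small //; lia.
- lia.
Qed.

Lemma ordSS_neq n (i : 'I_n) : (2 < n)%N -> ordS (ordS i) != i.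
Proof.
move=> hn; apply/eqP => /(congr1 val) /=; have := ltn_ord i.
case: (ltngtP i.+2 n) => h hi.
- by rewrite !modn_small //; lia.
- have -> : i.+1 = n by lia.
  by rewrite modnn modn_small //; lia.
- by rewrite (modn_small (_ : i.+1 < n)%N) ?h ?modnn; lia.
Qed.

Lemma ordS_eq n (i j : 'I_n) : (ordS j == i) = (j == ord_pred i).
Proof. by apply/eqP/eqP => [<-|->]; [rewrite ordSK | rewrite ord_predK]. Qed.

Lemma ord_pred_neq n (i : 'I_n) : (1 < n)%N -> ord_pred i != i.
Proof. by move=> hn; rewrite eq_sym -ordS_eq ordS_neq. Qed.

Lemma ord_pred_neq_ordS n (i : 'I_n) : (2 < n)%N -> ord_pred i != ordS i.
Proof. by move=> hn; rewrite -(inj_eq (@ordS_inj n)) ord_predK eq_sym ordSS_neq. Qed.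

Lemma sum_supp2 {T : finType} {M : nmodType} {F : T -> M} {a b : T} : a != b ->
  (forall i, i != a -> i != b -> F i = 0) -> \sum_i F i = F a + F b.
Proof.
move=> ab F0; rewrite (bigD1 a) //= (bigD1 b) 1?eq_sym //= big1 ?addr0 //.
by move=> i /andP[ia ib]; apply: F0.
Qed.

Lemma mdeg_eq2 {n} {m : 'X_{1..n}} : mdeg m = 2%N -> exists a b, m = (U_(a) + U_(b))%MM.
Proof.
move=> hm; have [a ma] : exists a, (0 < m a)%N.
  apply/existsP; apply: contraT; rewrite negb_exists => /forallP m0.
  by move: hm; rewrite mdegE big1 // => i _; apply/eqP; rewrite -leqn0 leqNgt m0.
have mE : m = (U_(a) + (m - U_(a)))%MM.
  apply/mnmP => i; rewrite mnmDE mnmBE mnm1E.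
  by case: eqP => [<-|_]; [rewrite add1n subn1 prednK | rewrite add0n subn0].
have : mdeg (m - U_(a))%MM == 1%N.
  by have := mdegD U_(a) (m - U_(a))%MM; rewrite -mE hm mdeg1 add1n => -[<-].
by case/mdeg1P => b /eqP mb; exists a, b; rewrite mE mb.
Qed.

Lemma mnm1D_inj {n} {i j a b : 'I_n} : (U_(i) + U_(j) = U_(a) + U_(b))%MM ->
  (i = a /\ j = b) \/ (i = b /\ j = a).
Proof.
move=> E; have Ei := congr1 (fun m : 'X_{1..n} => m i) E.
rewrite /= !mnmDE !mnm1E eqxx in Ei.
have addmI1 (x y z : 'I_n) : (U_(x) + U_(y) = U_(x) + U_(z))%MM -> y = z.
  by move/addmI/eqP; rewrite eq_mnm1 => /eqP.
case: (eqVneq a i) => [ai|ai].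
  by subst a; left; split=> //; apply: (addmI1 i).
case: (eqVneq b i) Ei => [bi|bi]; last by rewrite (negbTE ai).
by subst b; right; split=> //; apply: (addmI1 i); rewrite E addmC.
Qed.

Section QuadraticForms.
Context {R : comNzRingType} {n : nat}.
Implicit Types (q : {mpoly R[n]}) (x : 'I_n -> R).

Definition qcoef q (i j : 'I_n) : R :=
  if (i <= j)%N then q@_(U_(i) + U_(j)) else 0.

Lemma qcoef_diag q a : qcoef q a a = q@_(U_(a) + U_(a)).
Proof. by rewrite /qcoef leqnn. Qed.

Lemma qcoef_eq0 q i j : q@_(U_(i) + U_(j)) = 0 -> qcoef q i j = 0.
Proof. by rewrite /qcoef => ->; case: ifP. Qed.

Lemma qcoefDC q {a b} : a != b -> qcoef q a b + qcoef q b a = q@_(U_(a) + U_(b)).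
Proof.
move=> ab; rewrite /qcoef; case: (ltngtP a b) => [_|_|/val_inj abE].
- by rewrite addr0.
- by rewrite add0r addmC.
- by rewrite abE eqxx in ab.
Qed.

Lemma homog2_mpolyE q : q \is 2.-homog ->
  q = \sum_i \sum_j qcoef q i j *: ('X_i * 'X_j).
Proof.
move=> hq; apply/mpolyP => m; rewrite raddf_sum /=.
under eq_bigr => i _ do rewrite raddf_sum /=.
under eq_bigr => i _ do under eq_bigr => j _ do rewrite mcoeffZ -mpolyXD mcoeffX.
have [m2|m2] := eqVneq (mdeg m) 2%N; last first.
  rewrite (dhomog_nemf_coeff hq m2) big1 // => i _; rewrite big1 // => j _.
  case: eqP => [mE|_]; last by rewrite mulr0.
  by move: m2; rewrite -mE mdegD !mdeg1 eqxx.
have [a [b ->]] := mdeg_eq2 m2.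
wlog ab : a b / (a <= b)%N.
  by move=> W; case: (leqP a b) => [|/ltnW] ba; [|rewrite addmC]; apply: W.
rewrite (bigD1 a) //= [X in _ + X]big1 ?addr0 => [|i ia]; last first.
  rewrite big1 // => j _; case: eqP => [/mnm1D_inj [[ai _]|[bi aj]]|_]; rewrite ?mulr0 //.
    by rewrite ai eqxx in ia.
  rewrite /qcoef bi aj; case: (ltngtP a b) ab => // [_|/val_inj ab] _; first by rewrite mul0r.
  by rewrite bi ab eqxx in ia.
rewrite (bigD1 b) //= [X in _ + X]big1 ?addr0 => [|j jb]; last first.
  case: eqP => [/mnm1D_inj [[_ bj]|[ab' aj]]|_]; rewrite ?mulr0 //.
    by rewrite bj eqxx in jb.
  by rewrite aj ab' eqxx in jb.
by rewrite eqxx mulr1 /qcoef ab.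
Qed.

Lemma homog2_mevalE q x : q \is 2.-homog ->
  q.@[x] = \sum_i \sum_j qcoef q i j * (x i * x j).
Proof.
move=> hq; rewrite {1}(homog2_mpolyE q hq) rmorph_sum; apply: eq_bigr => i _.
rewrite rmorph_sum; apply: eq_bigr => j _.
by rewrite /= mevalZ mevalM !mevalXU.
Qed.

Lemma homog2_meval_supp2 {q x a b} : q \is 2.-homog -> a != b ->
    (forall i, i != a -> i != b -> x i = 0) ->
  q.@[x] = q@_(U_(a) + U_(a)) * x a ^+ 2 + q@_(U_(a) + U_(b)) * (x a * x b)
           + q@_(U_(b) + U_(b)) * x b ^+ 2.
Proof.
move=> hq ab x0; rewrite homog2_mevalE // (sum_supp2 ab) => [|i ia ib]; last first.
  by rewrite big1 // => j _; rewrite x0 // mul0r mulr0.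
have supp_ab i : \sum_j qcoef q i j * (x i * x j)
                 = qcoef q i a * (x i * x a) + qcoef q i b * (x i * x b).
  by rewrite (sum_supp2 ab) // => j ja jb; rewrite (x0 j) // !mulr0.
rewrite !supp_ab -!qcoef_diag -(qcoefDC q ab); ring.
Qed.

End QuadraticForms.

Section WachspressCoordinates.
Context {R : realFieldType} {d : nat} (v : 'I_d -> R * R).

Local Notation ell j p := (det3 (vhom v j) (vhom v (ordS j)) p).

Lemma well_meval j p : (well v j).@[p] = ell j p.
Proof.
rewrite /well !det3E.
by rewrite !rmorphD !rmorphN !rmorphM /= !rmorphB /= !rmorphM /= !mevalC !mevalXU.
Qed.

Lemma wb_meval i p : (wb v i).@[p] =
  walpha v i * \prod_(j | (j != ord_pred i) && (j != i)) ell j p.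
Proof.
rewrite /wb mevalZ rmorph_prod; congr (_ * _).
by apply: eq_bigr => j _; apply: well_meval.
Qed.

Lemma wb_meval_eq0 i p j : j != ord_pred i -> j != i -> ell j p = 0 ->
  (wb v i).@[p] = 0.
Proof. by move=> j1 j2 ell0; rewrite wb_meval (bigD1 j) ?j1 //= ell0 mul0r mulr0. Qed.

Hypotheses (hd : (2 < d)%N) (hconv : convex_polygon v).

Lemma convex_edge_sign : exists2 s : R,
  forall i t, 0 <= s * ell i (vhom v t) &
  forall i j, j != i -> j != ordS i -> 0 < s * ell i (vhom v j).
Proof.
have [s pos] : exists s : R,
    forall i j, j != i -> j != ordS i -> 0 < s * ell i (vhom v j).
  case: hconv => sgn; [exists 1 | exists (-1)] => i j ji jSi.
  - by rewrite mul1r sgn.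
  - by rewrite mulN1r oppr_gt0 sgn.
exists s => // i t; have [-> | ti] := eqVneq t i; first by rewrite det3_eq13 mulr0.
have [-> | tSi] := eqVneq t (ordS i); first by rewrite det3_eq23 mulr0.
exact/ltW/pos.
Qed.

Lemma ell_vertexD_neq0 i j t : j != i -> j != ordS i ->
  ell i (vhom v j) + ell i (vhom v t) != 0.
Proof.
move=> ji jSi; have [s ge0 pos] := convex_edge_sign.
have : 0 < s * (ell i (vhom v j) + ell i (vhom v t)).
  by rewrite mulrDr; apply: ltr_wpDr (ge0 i t) (pos i j ji jSi).
by apply: contraTneq => ->; rewrite mulr0 ltxx.
Qed.

Lemma ell_vertex_neq0 i j : j != i -> j != ordS i -> ell i (vhom v j) != 0.
Proof.
move=> ji jSi; have := ell_vertexD_neq0 i j i ji jSi.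
by rewrite det3_eq13 addr0.
Qed.

Lemma walpha_neq0 i : walpha v i != 0.
Proof.
rewrite /walpha -[in vhom v i](ord_predK i); apply: ell_vertex_neq0.
- by rewrite eq_sym ord_pred_neq_ordS.
- by rewrite ord_predK ordS_neq // ltnW.
Qed.

Lemma wb_meval_neq0 i p : (forall j, j != ord_pred i -> j != i -> ell j p != 0) ->
  (wb v i).@[p] != 0.
Proof.
move=> ell_neq0; rewrite wb_meval mulf_neq0 ?walpha_neq0 //.
by apply/prodf_neq0 => j /andP[]; apply: ell_neq0.
Qed.

Lemma wb_vertex_neq0 k : (wb v k).@[vhom v k] != 0.
Proof.
apply: wb_meval_neq0 => j jPk jk; apply: ell_vertex_neq0; first by rewrite eq_sym.
by rewrite eq_sym ordS_eq.
Qed.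

Lemma wb_vertex_eq0 i k : i != k -> (wb v i).@[vhom v k] = 0.
Proof.
move=> ik; have [iSk | iSk] := eqVneq i (ordS k).
  apply: (@wb_meval_eq0 _ _ (ord_pred k)); rewrite ?iSk ?ordSK.
  - by rewrite ord_pred_neq // ltnW.
  - exact: ord_pred_neq_ordS.
  - by rewrite ord_predK det3_eq23.
apply: (@wb_meval_eq0 _ _ k); last exact: det3_eq13.
- by rewrite -ordS_eq eq_sym.
- by rewrite eq_sym.
Qed.

Definition edge_mid k : 'I_3 -> R := fun t => vhom v k t + vhom v (ordS k) t.

Lemma wb_edge_mid_eq0 i k : i != k -> i != ordS k -> (wb v i).@[edge_mid k] = 0.
Proof.
move=> ik iSk; apply: (@wb_meval_eq0 _ _ k).
- by rewrite -ordS_eq eq_sym.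
- by rewrite eq_sym.
- by rewrite det3D det3_eq13 det3_eq23 addr0.
Qed.

Lemma wb_edge_mid_neq0 i k : (i == k) || (i == ordS k) ->
  (wb v i).@[edge_mid k] != 0.
Proof.
case/orP=> /eqP ->; apply: wb_meval_neq0 => j jP ji; rewrite det3D.
- apply: ell_vertexD_neq0; first by rewrite eq_sym.
  by rewrite eq_sym ordS_eq.
- rewrite ordSK in jP; rewrite addrC; apply: ell_vertexD_neq0; first by rewrite eq_sym.
  by rewrite (inj_eq (@ordS_inj d)) eq_sym.
Qed.

Context {q : {mpoly R[d]}}.
Hypotheses (hq : q \is 2.-homog) (hvan : vanishes_on_W v q).

Lemma vanishes_on_W_square_coef k : q@_(U_(k) + U_(k)) = 0.
Proof.
pose x i := (wb v i).@[vhom v k].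
have kSk : k != ordS k by rewrite eq_sym ordS_neq // ltnW.
have x0 i : i != k -> x i = 0 by apply: wb_vertex_eq0.
have : q.@[x] = 0 by apply: hvan; exists k; apply: wb_vertex_neq0.
rewrite (homog2_meval_supp2 hq kSk) => [|i ik _]; last exact: x0.
rewrite [x (ordS k)]x0 1?eq_sym // expr0n !mulr0 !addr0.
by move/eqP; rewrite mulf_eq0 expf_eq0 (negbTE (wb_vertex_neq0 k)) orbF => /eqP.
Qed.

Lemma vanishes_on_W_edge_coef k : q@_(U_(k) + U_(ordS k)) = 0.
Proof.
pose x i := (wb v i).@[edge_mid k].
have kSk : k != ordS k by rewrite eq_sym ordS_neq // ltnW.
have xk : x k != 0 by apply: wb_edge_mid_neq0; rewrite eqxx.
have xSk : x (ordS k) != 0 by apply: wb_edge_mid_neq0; rewrite eqxx orbT.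
have : q.@[x] = 0 by apply: hvan; exists k.
rewrite (homog2_meval_supp2 hq kSk) => [|i ik iSk]; last exact: wb_edge_mid_eq0.
rewrite !vanishes_on_W_square_coef !mul0r addr0 add0r.
by move/eqP; rewrite !mulf_eq0 (negbTE xk) (negbTE xSk) !orbF => /eqP.
Qed.

End WachspressCoordinates.

Theorem lemma3p1 (R : realFieldType) (d : nat) (v : 'I_d -> R * R)
  (hd : (4 <= d)%N)
  (hconv : convex_polygon v)
  (hconc : no_three_edge_lines_concurrent v)
  (q : {mpoly R[d]}) (hq : q \is 2.-homog)
  (hvan : vanishes_on_W v q) :
  in_diag_span q.
Proof.
have d2 : (2 < d)%N by apply: leq_trans hd.
exists (qcoef q); rewrite {1}(homog2_mpolyE q hq); apply: eq_bigr => i _.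
rewrite [RHS]big_mkcond /=; apply: eq_bigr => j _.
case: ifP => // /negbT; rewrite /diagonal_pair !negb_and !negbK => ndiag.
suff -> : qcoef q i j = 0 by rewrite scale0r.
have square0 := vanishes_on_W_square_coef v d2 hconv hq hvan.
have edge0 := vanishes_on_W_edge_coef v d2 hconv hq hvan.
apply: qcoef_eq0; case/or3P: ndiag => /eqP ->.
- by rewrite addmC -{2}(ord_predK i) edge0.
- exact: square0.
- exact: edge0.
Qed.
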